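(* Let $A\subset\mathbb{N}$ be a normal set. Then there exist $x,y\in A$ such that $x^2+y^2$ is a perfect square, and there exist $u,v\in A$ such that $u^2-v^2$ is a perfect square.
   Context: $\mathbb{N}=\{1,2,\dots\}$. A sequence in $\{0,1\}^{\mathbb{N}}$ is normal if every finite binary word $w$ occurs in it with asymptotic frequency $2^{-|w|}$. A set $A\subset\mathbb{N}$ is normal if its indicator sequence is normal. *)

From mathcomp Require Import all_boot all_order all_algebra.
Set Implicit Arguments. Unset Strict Implicit. Unset Printing Implicit Defensive.
Import Order.TTheory GRing.Theory Num.Theory.

Definition occurs_at (a : nat -> bool) (w : seq bool) (n : nat) : bool :=
  all (fun i => a (n + i) == nth false w i) (iota 0 (size w)).

Definition occ_count (a : nat -> bool) (w : seq bool) (N : nat) : nat :=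
  count (occurs_at a w) (iota 1 N).

Definition normal_seq (a : nat -> bool) : Prop :=
  forall (w : seq bool) (eps : rat), (0 < eps)%R ->
    exists N0 : nat, forall N : nat, (N0 <= N)%N ->
      (`| (occ_count a w N)%:R / N%:R - (2%:R ^+ size w)^-1 | < eps)%R.

(* A subset A of N = {1,2,...} (given as a predicate on nat with 0 excluded)
   is normal if its indicator sequence (a_n = [n \in A], n >= 1) is normal. *)
Definition normal_set (A : pred nat) : Prop :=
  ~~ A 0 /\ normal_seq A.

(* Normality makes every window of length l equidistributed, so the sums
   Y(n) of +-1 over the progression n, n + q, ..., n + (m-1) q have mean
   square m.  Sampling n along the multiples of q and an AM-GM step then show
   that more than a third of the multiples of q lie in A, eventually.  Hence
   for any c1, c2, c3 > 0 two of c1 k, c2 k, c3 k lie in A for some k, and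
   it remains to pick triples whose pairwise sums (resp. differences) of
   squares are squares. *)

From mathcomp Require Import all_boot all_order all_algebra.
From mathcomp Require Import ring lra zify.
Set Implicit Arguments. Unset Strict Implicit. Unset Printing Implicit Defensive.
Import Order.TTheory GRing.Theory Num.Theory.
Local Open Scope ring_scope.

Definition window (a : nat -> bool) (n l : nat) : seq bool :=
  mkseq (fun i => a (n + i)%N) l.

Lemma occurs_atE a w n : occurs_at a w n = (window a n (size w) == w).
Proof.
apply/allP/eqP => [occ | <- i].
- apply: (@eq_from_nth _ false); rewrite ?size_mkseq // => i lt_i.
  by rewrite nth_mkseq //; apply/eqP/occ; rewrite mem_iota.
- by rewrite mem_iota size_mkseq => /andP[_ lt_i]; rewrite nth_mkseq.
Qed.

Fixpoint words (l : nat) : seq (seq bool) :=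
  if l is l'.+1 then [seq false :: w | w <- words l'] ++ [seq true :: w | w <- words l']
  else [:: [::]].

Lemma size_words_mem l w : w \in words l -> size w = l.
Proof.
elim: l w => [|l IHl] w /=; first by rewrite inE => /eqP->.
by rewrite mem_cat => /orP[] /mapP[v /IHl + ->] /= => ->.
Qed.

Lemma sumr_const_seq (T : Type) (s : seq T) (c : rat) : \sum_(x <- s) c = (size s)%:R * c.
Proof. by rewrite big_const_seq count_predT iter_addr addr0 mulr_natl. Qed.

Lemma sum_words_cons l (F : seq bool -> rat) :
  \sum_(w <- words l.+1) F w = \sum_(w <- words l) (F (false :: w) + F (true :: w)).
Proof. by rewrite big_cat !big_map big_split. Qed.

Lemma sum_words_const l (c : rat) : \sum_(w <- words l) c = (2 ^ l)%:R * c.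
Proof.
elim: l => [|l IHl]; first by rewrite big_seq1 mul1r.
by rewrite sum_words_cons big_split /= IHl expnS natrM; ring.
Qed.

Lemma sum_words_pick l (F : seq bool -> rat) w0 : size w0 = l ->
  \sum_(w <- words l) (w == w0)%:R * F w = F w0.
Proof.
elim: l F w0 => [|l IHl] F [|b v0] //=; first by rewrite big_seq1 eqxx mul1r.
move=> [size_v0]; rewrite big_cat !big_map /=.
under eq_bigr do rewrite eqseq_cons.
under [X in _ + X]eq_bigr do rewrite eqseq_cons.
by case: b; rewrite /= (IHl _ _ size_v0) big1 ?add0r ?addr0 // => w _; rewrite mul0r.
Qed.

Definition bsign (b : bool) : rat := if b then 1 else -1.

Lemma bsignE b : bsign b = 2 * b%:R - 1.
Proof. by case: b; rewrite /bsign /=; ring. Qed.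

Lemma norm_bsign b : `|bsign b| = 1.
Proof. by case: b; rewrite /bsign ?normrN normr1. Qed.

Lemma sum_words_bsign_mul l i k : (i < l)%N -> (k < l)%N ->
  \sum_(w <- words l) bsign (nth false w i) * bsign (nth false w k) = (i == k)%:R * (2 ^ l)%:R.
Proof.
have [<- _ _|] := eqVneq i k.
  rewrite (eq_bigr (fun=> 1)) ?sum_words_const ?mulr1 ?mul1r // => w _.
  by case: nth; rewrite /bsign ?mulrNN mulr1.
elim: l i k => [|l IHl] [|i] [|k] //= neq_ik lt_i lt_k; rewrite sum_words_cons /= mul0r.
- by rewrite big1 // => w _; ring.
- by rewrite big1 // => w _; ring.
- by rewrite big_split /= IHl ?mul0r ?addr0.
Qed.

Definition word_block_sum (q m : nat) (w : seq bool) : rat :=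
  \sum_(j < m) bsign (nth false w (j * q)).

Lemma sum_words_word_block_sum_sqr q m : (0 < q)%N ->
  \sum_(w <- words (m * q)) word_block_sum q m w ^+ 2 = m%:R * (2 ^ (m * q))%:R.
Proof.
move=> q_gt0; have lt_mq (j : 'I_m) : (j * q < m * q)%N by rewrite ltn_pmul2r.
under eq_bigr do rewrite expr2 mulr_suml; under eq_bigr do under eq_bigr do rewrite mulr_sumr.
rewrite exchange_big (eq_bigr (fun=> (2 ^ (m * q))%:R)) => [|j _].
  by rewrite sumr_const card_ord mulr_natl.
rewrite exchange_big (bigD1 j) //= sum_words_bsign_mul ?eqxx ?mul1r //.
rewrite big1 ?addr0 // => k neq_kj; rewrite sum_words_bsign_mul // eqn_pmul2r //.
have /negbTE-> : (j : nat) != k by rewrite eq_sym.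
by rewrite mul0r.
Qed.

Lemma sum_iota_mul_le (f : nat -> rat) q K : (0 < q)%N -> (forall n, 0 <= f n) ->
  \sum_(k <- iota 1 K) f (q * k)%N <= \sum_(n <- iota 1 (q * K)) f n.
Proof.
move=> q_gt0 f_ge0; elim: K => [|K IHK]; first by rewrite muln0 !big_nil.
rewrite -[K.+1]addn1 mulnDr muln1 !iotaD !big_cat /= lerD // big_seq1.
rewrite (bigD1_seq (q * (1 + K))%N) ?iota_uniq ?mem_iota //=; last lia.
by rewrite lerDl sumr_ge0.
Qed.

Lemma sum_iota_shift_le (f : nat -> rat) K j : (forall n, `|f n| <= 1) ->
  \sum_(k <- iota 1 K) f (k + j)%N <= \sum_(k <- iota 1 K) f k + 2 * j%:R.
Proof.
move=> f_le1; elim: j => [|j IHj].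
  by rewrite mulr0n mulr0 addr0; under eq_bigr do rewrite addn0.
have step : \sum_(k <- iota 1 K) f (k + j.+1)%N - \sum_(k <- iota 1 K) f (k + j)%N <= 2.
  rewrite -sumrB; under eq_bigr do rewrite -addSnnS.
  have -> : iota 1 K = index_iota 1 K.+1 by rewrite /index_iota subSS subn0.
  rewrite (telescope_sumr (fun k => f (k + j)%N)) //.
  by have := f_le1 (K.+1 + j)%N; have := f_le1 (1 + j)%N; rewrite !ler_norml; lra.
rewrite -natr1; lra.
Qed.

(* The numerical core of the density bound for blocks of m = 16 q signs: the
   hypotheses give 512 C >= 175 K - 8192 Q, and 175 / 512 > 1 / 3. *)
Lemma count_gt_third_of_moment_bounds (Q K C E S1 S2 : rat) :
  1 <= Q -> 2000 * Q <= K ->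
  S2 <= 17 * Q ^+ 2 * K -> - 16 * Q * S1 <= S2 + 64 * Q ^+ 2 * K ->
  S1 <= 16 * Q * E + 512 * Q ^+ 2 -> E = 2 * C - K -> K < 3 * C.
Proof.
move=> Q_ge1 le_K moment am_gm shift E_def.
have {}shift : 16 * Q * S1 <= 16 * Q * (16 * Q * E + 512 * Q ^+ 2).
  by apply: ler_wpM2l shift; clear -Q_ge1; lra.
have : Q ^+ 2 * (- 256 * E - 8192 * Q) <= Q ^+ 2 * (81 * K).
  by clear -Q_ge1 moment am_gm shift; lra.
have Q2_gt0 : 0 < Q ^+ 2 by apply: exprn_gt0; clear -Q_ge1; lra.
by rewrite (ler_pM2l Q2_gt0) E_def; clear -le_K Q_ge1; lra.
Qed.

Lemma count3_le_size (T : Type) (P1 P2 P3 : pred T) (s : seq T) :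
  all (fun x => P1 x + P2 x + P3 x <= 1)%N s ->
  (count P1 s + count P2 s + count P3 s <= size s)%N.
Proof. by elim: s => //= x s IHs /andP[le_x /IHs]; lia. Qed.

Section NormalSequence.

Variable a : nat -> bool.
Hypothesis normal_a : normal_seq a.

Lemma normal_seq_uniform (s : seq (seq bool)) (eps : rat) : 0 < eps ->
  exists N0, forall N, (N0 <= N)%N -> forall w, w \in s ->
    `| (occ_count a w N)%:R / N%:R - (2%:R ^+ size w)^-1 | < eps.
Proof.
move=> eps_gt0; elim: s => [|w s [N1 IHs]]; first by exists 0%N.
have [N2 Hw] := normal_a w eps_gt0.
exists (maxn N1 N2) => N; rewrite geq_max => /andP[le_N1 le_N2] v.
by rewrite inE => /predU1P[->|/IHs]; [exact: Hw | apply].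
Qed.

Lemma sum_window_words l (F : seq bool -> rat) N :
  \sum_(n <- iota 1 N) F (window a n l) = \sum_(w <- words l) F w * (occ_count a w N)%:R.
Proof.
transitivity (\sum_(n <- iota 1 N) \sum_(w <- words l) (w == window a n l)%:R * F w).
  by apply: eq_bigr => n _; rewrite sum_words_pick // size_mkseq.
rewrite exchange_big big_seq [RHS]big_seq; apply: eq_bigr => w /size_words_mem size_w.
rewrite /occ_count -sum1_count natr_sum mulr_sumr [RHS]big_mkcond /=.
by apply: eq_bigr => n _; rewrite occurs_atE size_w eq_sym; case: eqP; rewrite ?mulr1 ?mulr0 ?mul1r ?mul0r.
Qed.

Lemma normal_seq_window_average l (F : seq bool -> rat) (eps : rat) : 0 < eps ->
  exists N0, forall N, (N0 <= N)%N ->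
  `| (\sum_(n <- iota 1 N) F (window a n l)) / N%:R
     - (\sum_(w <- words l) F w) / (2%:R ^+ l) | < eps.
Proof.
move=> eps_gt0; set S := \sum_(w <- words l) `|F w|.
have S_ge0 : 0 <= S by apply: sumr_ge0.
have [N0 HN0] := normal_seq_uniform (words l) (divr_gt0 eps_gt0 (ltr_wpDr S_ge0 ltr01)).
exists N0 => N /HN0 close; rewrite sum_window_words !mulr_suml -sumrB.
apply: le_lt_trans (ler_norm_sum _ _ _) _.
apply: (@le_lt_trans _ _ (S * (eps / (1 + S)))).
  rewrite mulr_suml big_seq [X in _ <= X]big_seq; apply: ler_sum => w w_l.
  rewrite -mulrA -mulrBr normrM ler_wpM2l // ltW //.
  by rewrite -(size_words_mem w_l) close.
rewrite mulrA ltr_pdivrMr ?ltr_wpDr //; nra.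
Qed.

Definition block_sum (q m n : nat) : rat := \sum_(j < m) bsign (a (n + j * q)%N).

Lemma word_block_sum_window q m n : (0 < q)%N ->
  word_block_sum q m (window a n (m * q)) = block_sum q m n.
Proof. by move=> q_gt0; apply: eq_bigr => j _; rewrite nth_mkseq // ltn_pmul2r. Qed.

Lemma block_sum_second_moment q m : (0 < q)%N ->
  exists N0, forall N, (N0 <= N)%N ->
  \sum_(n <- iota 1 N) block_sum q m n ^+ 2 <= (m%:R + 1) * N%:R.
Proof.
move=> q_gt0.
have [N0 HN0] := normal_seq_window_average (m * q) (fun w => word_block_sum q m w ^+ 2) ltr01.
exists (maxn N0 1) => N; rewrite geq_max => /andP[/HN0 + N_gt0].
rewrite sum_words_word_block_sum_sqr // natrX -mulrA mulfV ?expf_neq0 ?pnatr_eq0 // mulr1.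
under eq_bigr do rewrite word_block_sum_window //.
rewrite ltr_norml => /andP[_]; rewrite ltrBlDr ltr_pdivrMr ?ltr0n //.
by rewrite addrC => /ltW.
Qed.

Lemma normal_seq_count_multiples q : (0 < q)%N ->
  exists K0, forall K, (K0 <= K)%N -> (K < 3 * count (fun k => a (q * k)%N) (iota 1 K))%N.
Proof.
move=> q_gt0; pose m := (16 * q)%N.
have [N0 HN0] := block_sum_second_moment m q_gt0.
exists (maxn N0 (2000 * q)) => K; rewrite geq_max => /andP[le_N0 le_K].
pose Y k := block_sum q m (q * k).
pose S1 := \sum_(k <- iota 1 K) Y k.
pose S2 := \sum_(k <- iota 1 K) Y k ^+ 2.
pose E := \sum_(k <- iota 1 K) bsign (a (q * k)%N).
pose C := count (fun k => a (q * k)%N) (iota 1 K).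
have K_sum : K%:R = \sum_(k <- iota 1 K) (1 : rat) by rewrite sumr_const_seq size_iota mulr1.
have q_ge1 : 1 <= q%:R :> rat by rewrite ler1n.
have second_moment : S2 <= 17 * q%:R ^+ 2 * K%:R.
  apply: le_trans (sum_iota_mul_le _ q_gt0 (fun n => sqr_ge0 (block_sum q m n))) _.
  apply: le_trans (HN0 _ (leq_trans le_N0 (leq_pmull _ q_gt0))) _.
  have -> : 17 * q%:R ^+ 2 * K%:R = 17 * q%:R * (q%:R * K%:R) :> rat by ring.
  by rewrite natrM natrM ler_wpM2r ?mulr_ge0 //; lra.
have am_gm : - 16 * q%:R * S1 <= S2 + 64 * q%:R ^+ 2 * K%:R.
  rewrite K_sum !mulr_sumr -big_split /=; apply: ler_sum => k _.
  by have := sqr_ge0 (Y k + 8 * q%:R); lra.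
have shift : S1 <= 16 * q%:R * E + 512 * q%:R ^+ 2.
  have -> : S1 = \sum_(j < m) \sum_(k <- iota 1 K) bsign (a (q * (k + j))%N).
    rewrite /S1 /Y /block_sum exchange_big.
    by apply: eq_bigr => j _; apply: eq_bigr => k _; rewrite mulnDr [(j * q)%N]mulnC.
  apply: (@le_trans _ _ (\sum_(j < m) (E + 2 * m%:R))).
    apply: ler_sum => j _; apply: le_trans (@sum_iota_shift_le (fun i => bsign (a (q * i)%N)) K j _) _.
      by move=> n; rewrite norm_bsign.
    by rewrite lerD2l ler_wpM2l // ler_nat ltnW.
  rewrite sumr_const card_ord -[_ *+ m]mulr_natl natrM.
  by rewrite le_eqVlt; apply/orP; left; apply/eqP; ring.
have sign_sum : E = 2 * C%:R - K%:R.
  rewrite K_sum /C -sum1_count natr_sum big_mkcond mulr_sumr -sumrB.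
  by apply: eq_bigr => k _; rewrite bsignE; case: (a _).
rewrite -(ltr_nat rat) natrM -/C.
apply: (count_gt_third_of_moment_bounds q_ge1 _ second_moment am_gm shift sign_sum).
by rewrite -natrM ler_nat.
Qed.

Lemma normal_seq_scaled_pair (R : nat -> nat -> Prop) c1 c2 c3 :
  (forall x y k, (0 < k)%N -> R x y -> R (x * k)%N (y * k)%N) ->
  R c1 c2 -> R c1 c3 -> R c2 c3 -> (0 < c1)%N -> (0 < c2)%N -> (0 < c3)%N ->
  exists x y, [/\ a x, a y & R x y].
Proof.
move=> R_scale R12 R13 R23 c1_gt0 c2_gt0 c3_gt0.
have [K1 HK1] := normal_seq_count_multiples c1_gt0.
have [K2 HK2] := normal_seq_count_multiples c2_gt0.
have [K3 HK3] := normal_seq_count_multiples c3_gt0.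
pose K := maxn K1 (maxn K2 K3).
pose P (c k : nat) := a (c * k)%N.
have [/hasP[k]|/hasPn few] := boolP (has (fun k => 1 < P c1 k + P c2 k + P c3 k)%N (iota 1 K)).
- rewrite mem_iota => /andP[k_gt0 _].
  have pick x y : P x k -> P y k -> R x y -> exists x y, [/\ a x, a y & R x y].
    by move=> ax ay Rxy; exists (x * k)%N, (y * k)%N; split=> //; exact: R_scale.
  rewrite /P; case a1 : (a (c1 * k)); case a2 : (a (c2 * k)); case a3 : (a (c3 * k)) => //= _;
    by [exact: pick a1 a2 R12 | exact: pick a1 a3 R13 | exact: pick a2 a3 R23].
- have /count3_le_size : all (fun k => P c1 k + P c2 k + P c3 k <= 1)%N (iota 1 K).
    by apply/allP => k /few; rewrite -leqNgt.
  rewrite size_iota /P.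
  have := HK1 K; have := HK2 K; have := HK3 K; lia.
Qed.

End NormalSequence.

Local Close Scope ring_scope.

Theorem mainTheorem5 (A : pred nat) :
  normal_set A ->
  (exists x y z : nat, [/\ A x, A y, 0 < z & x ^ 2 + y ^ 2 = z ^ 2]) /\
  (exists u v z : nat, [/\ A u, A v, 0 < z & u ^ 2 - v ^ 2 = z ^ 2]).
Proof.
case=> _ normal_A; split.
- pose R x y := exists2 z, 0 < z & x ^ 2 + y ^ 2 = z ^ 2.
  have R_scale x y k : 0 < k -> R x y -> R (x * k) (y * k).
    move=> k_gt0 [z z_gt0 Exy]; exists (z * k); first by rewrite muln_gt0 z_gt0.
    by rewrite !expnMn -mulnDl Exy.
  (* (44, 117, 240) is an Euler brick. *)
  have R12 : R 44 117 by exists 125; lia.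
  have R13 : R 44 240 by exists 244; lia.
  have R23 : R 117 240 by exists 267; lia.
  have [x [y [Ax Ay [z z_gt0 Exy]]]] := normal_seq_scaled_pair normal_A R_scale R12 R13 R23 isT isT isT.
  by exists x, y, z.
- pose R x y := exists2 z, 0 < z & x ^ 2 - y ^ 2 = z ^ 2.
  have R_scale x y k : 0 < k -> R x y -> R (x * k) (y * k).
    move=> k_gt0 [z z_gt0 Exy]; exists (z * k); first by rewrite muln_gt0 z_gt0.
    by rewrite !expnMn -mulnBl Exy.
  have R12 : R 697 185 by exists 672; lia.
  have R13 : R 697 153 by exists 680; lia.
  have R23 : R 185 153 by exists 104; lia.
  have [u [v [Au Av [z z_gt0 Euv]]]] := normal_seq_scaled_pair normal_A R_scale R12 R13 R23 isT isT isT.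
  by exists u, v, z.
Qed.
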